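(* Let $W$ be a standard one-dimensional Brownian motion, $T>0$, and let $f:\mathbb{R}\to\mathbb{R}$ be bounded with ${\rm osc}_f(\delta)\le C\delta^\alpha$ for some $\alpha\in(0,1]$, $C>0$ and all sufficiently small $\delta>0$. Let $(n_\varepsilon)_{\varepsilon>0}$ be positive integers with $n_\varepsilon\nearrow\infty$ as $\varepsilon\to0$, $\delta_\varepsilon=T/n_\varepsilon$, $s_i=i\delta_\varepsilon$ ($i=0,\dots,n_\varepsilon$), $q_\varepsilon=2\sqrt{\delta_\varepsilon|\log\delta_\varepsilon|}$, $i(t)=\min\{j\in\{0,\dots,n_\varepsilon\}:s_j\ge t\}$, and \[ L_{\varepsilon,P_\varepsilon}(t)=\sum_{i=1}^{i(t)}\big(f(\varepsilon W(s_i))-f(\varepsilon W(s_{i-1}))\big)\big(W(s_i)-W(s_{i-1})\big),\qquad t\in[0,T]. \] Then there is a positive constant $K$ such that for any $\delta>0$ and $\varepsilon>0$, \[ \mathsf{P}\Big\{\sup_{t\in[0,T]}|L_{\varepsilon,P_\varepsilon}(t)|>\delta\Big\}\le\mathsf{P}\Big\{|\log\delta_\varepsilon|\,{\rm osc}_f(\varepsilon q_\varepsilon)>\frac{q_\varepsilon\delta}{4T}\Big\}+K\delta_\varepsilon. \] (The first probability on the right is either $0$ or $1$.)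
   Context: ${\rm osc}_f(\delta)=\sup_{|t-s|<\delta}|f(s)-f(t)|$. *)

From HB Require Import structures.
From mathcomp Require Import all_boot all_order all_algebra.
From mathcomp Require Import all_classical all_reals all_analysis.
Set Implicit Arguments. Unset Strict Implicit. Unset Printing Implicit Defensive.
Import Order.TTheory GRing.Theory Num.Theory.
Import numFieldNormedType.Exports.
Local Open Scope classical_set_scope.
Local Open Scope ring_scope.

(* osc_f(d) = sup_{|t-s|<d} |f(s)-f(t)| (real supremum; finite for bounded f) *)
Definition osc {R : realType} (f : R -> R) (d : R) : R :=
  sup [set x | exists s t, `|t - s| < d /\ x = `|f s - f t|].

Definition mutually_independent {R : realType} {d} {Om : measurableType d}
  (P : probability Om R) (k : nat) (X : 'I_k -> Om -> R) : Prop :=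
  forall B : 'I_k -> set R, (forall i, measurable (B i)) ->
    P [set w | forall i, B i (X i w)] = (\prod_(i < k) P (X i @^-1` B i))%E.

Definition brownian_motion {R : realType} {d} {Om : measurableType d}
  (P : probability Om R) (W : R -> Om -> R) : Prop :=
  [/\ (forall t, 0 <= t -> measurable_fun setT (W t)),
      {ae P, forall w, W 0 w = 0 /\
          {within [set t : R | 0 <= t], continuous (fun t => W t w)}},
      (forall s t, 0 <= s -> s < t -> forall B : set R, measurable B ->
          P [set w | B (W t w - W s w)] = normal_prob 0 (Num.sqrt (t - s)) B) &
      (forall (k : nat) (tt : nat -> R), 0 <= tt 0%N ->
          (forall i, (i < k)%N -> tt i < tt i.+1) ->
          mutually_independent P (fun (i : 'I_k) w => W (tt i.+1) w - W (tt i) w))].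

Definition grid {R : realType} (n : nat) (T : R) (i : nat) : R := i%:R * (T / n%:R).

Definition grid_index {R : realType} (n : nat) (T : R) (t : R) : nat :=
  find (fun j : nat => t <= grid n T j) (iota 0 n.+1).

Definition Lsum {R : realType} {Om : Type} (f : R -> R) (W : R -> Om -> R)
  (eps : R) (n : nat) (T : R) (t : R) (w : Om) : R :=
  \sum_(1 <= i < (grid_index n T t).+1)
     (f (eps * W (grid n T i) w) - f (eps * W (grid n T i.-1) w)) *
     (W (grid n T i) w - W (grid n T i.-1) w).

From HB Require Import structures.
From mathcomp Require Import all_boot all_order all_algebra.
From mathcomp Require Import all_classical all_reals all_analysis.
From mathcomp Require Import ring lra measurable_realfun.
Import Order.TTheory GRing.Theory Num.Theory.
Import numFieldNormedType.Exports.
Local Open Scope classical_set_scope.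
Local Open Scope ring_scope.
Set Implicit Arguments. Unset Strict Implicit. Unset Printing Implicit Defensive.

(* Write q = 2 sqrt(de |ln de|) with de = T/n.  On the event that every grid
   increment of W is smaller than q, each of the n summands of L is at most
   osc_f(eps q) q, so sup |L| <= n q osc_f(eps q); since q^2 = 4 de |ln de| and
   n de = T, the event sup |L| > delta then forces the deterministic inequality
   of the first probability.  Otherwise some increment, a centred Gaussian of
   variance de, exceeds q; the Gaussian tail 2 exp(-q^2 / 2de) = 2 de^2 and a
   union bound over the n increments give probability at most 2 T de. *)

Lemma measurable_abs_ge (R : realType) (a : R) : measurable [set x : R | a <= `|x|].
Proof.
have := normr_measurable measurableT (@measurable_itv R `[a, +oo[).
rewrite setTI; congr measurable; apply/seteqP; split => x /=;
  by rewrite in_itv /= andbT.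
Qed.

Lemma normal_pdf0_le_shifts (R : realType) (s a x : R) : 0 < s -> 0 < a -> a <= `|x| ->
  normal_pdf 0 s x <=
    expR (- a ^+ 2 / (s ^+ 2 *+ 2)) * (normal_pdf a s x + normal_pdf (- a) s x).
Proof.
move=> s0 a0 ax; rewrite /normal_pdf /normal_fun gt_eqF // subr0.
set k := (s ^+ 2 *+ 2)^-1.
have k0 : 0 < k by rewrite invr_gt0 pmulrn_lgt0 // exprn_gt0.
have p0 := normal_peak_ge0 s.
rewrite !mulNr mulrDr.
(* x^2 = a^2 + (x -+ a)^2 + 2 a (|x| - a) on either side of the tail *)
move: ax; rewrite ler_normr => /orP[] ax.
- apply: ler_wpDr; first by rewrite mulr_ge0 ?expR_ge0 ?mulr_ge0.
  rewrite mulrCA -expRD ler_wpM2l // ler_expR.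
  have : 0 <= k * (a * (x - a)) by rewrite mulr_ge0 ?mulr_ge0 ?subr_ge0 // ltW.
  nra.
- apply: ler_wpDl; first by rewrite mulr_ge0 ?expR_ge0 ?mulr_ge0.
  rewrite mulrCA -expRD ler_wpM2l // ler_expR.
  have : 0 <= k * (a * (- x - a)) by rewrite mulr_ge0 ?mulr_ge0 ?subr_ge0 // ltW.
  nra.
Qed.

Lemma normal_prob_abs_ge (R : realType) (s a : R) : 0 < s -> 0 < a ->
  (normal_prob 0 s [set x | (a <= `|x|)%R] <= (expR (- a ^+ 2 / (s ^+ 2 *+ 2)) *+ 2)%:E)%E.
Proof.
move=> s0 a0; set c := expR _; set D := [set x : R | a <= `|x|].
have mD : measurable D := measurable_abs_ge a.
have mpdf m : measurable_fun setT (EFin \o normal_pdf m s).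
  by apply/measurable_EFinP; exact: measurable_normal_pdf.
have pdf0 m x : (0 <= (normal_pdf m s x)%:E)%E by rewrite lee_fin normal_pdf_ge0.
rewrite /normal_prob.
apply: (@le_trans _ _ (\int[lebesgue_measure]_(x in D)
    (c%:E * ((normal_pdf a s x)%:E + (normal_pdf (- a) s x)%:E)))%E).
  apply: ge0_le_integral => //.
  - by apply: measurable_funTS; apply: mpdf.
  - apply/measurable_funTS/emeasurable_funM => //.
    exact: emeasurable_funD (mpdf a) (mpdf (- a)).
  - by move=> x Dx; rewrite -EFinD -EFinM lee_fin; exact: normal_pdf0_le_shifts.
apply: le_trans.
  apply: (ge0_subset_integral lebesgue_measure mD measurableT _ _ (@subsetT _ D)).
  - by apply: emeasurable_funM => //; exact: emeasurable_funD (mpdf a) (mpdf (- a)).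
  - by move=> x _; rewrite mule_ge0 ?adde_ge0 // lee_fin expR_ge0.
rewrite ge0_integralZl ?lee_fin ?expR_ge0 //; last 2 first.
- exact: emeasurable_funD (mpdf a) (mpdf (- a)).
- by move=> x _; rewrite adde_ge0.
rewrite ge0_integralD //; [|exact: mpdf|exact: mpdf].
rewrite !integral_normal_pdf -EFinD -EFinM lee_fin.
by rewrite mulrDr mulr1 mulr2n.
Qed.

Lemma normal_prob_abs_ge_log_level (R : realType) (s : R) : 0 < s < 1 ->
  (normal_prob 0 (Num.sqrt s) [set x | (2 * Num.sqrt (s * `|ln s|) <= `|x|)%R]
     <= (s ^+ 2 *+ 2)%:E)%E.
Proof.
move=> /andP[s0 s1]; have ln_neg : ln s < 0 by rewrite ln_lt0 // s0.
apply: le_trans (normal_prob_abs_ge _ _) _.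
- by rewrite sqrtr_gt0.
- by rewrite mulr_gt0 // sqrtr_gt0 mulr_gt0 // normr_gt0 lt_eqF.
have s_ge0 := ltW s0.
rewrite lee_fin ler_pMn2r // exprMn !sqr_sqrtr ?mulr_ge0 //.
rewrite ltr0_norm // (_ : - (2 ^+ 2 * (s * - ln s)) / (s *+ 2) = 2%:R * ln s).
  by rewrite expRM_natl lnK.
by field; rewrite gt_eqF.
Qed.

Lemma lt_log_level (R : realType) (N : nat) (T de dl o : R) : (0 < N)%N -> 0 < de ->
  N%:R * de = T -> let q := 2 * Num.sqrt (de * `|ln de|) in 0 < q ->
  dl < N%:R * (o * q) -> q * dl / (4 * T) < `|ln de| * o.
Proof.
move=> N0 de0 Nde q q0 dl_lt.
have q2 : q ^+ 2 = 4 * (de * `|ln de|).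
  by rewrite exprMn sqr_sqrtr ?mulr_ge0 ?normr_ge0 ?(ltW de0) //; ring.
have -> : `|ln de| * o = q * (N%:R * (o * q)) / (4 * T).
  have -> : q * (N%:R * (o * q)) = N%:R * o * q ^+ 2 by ring.
  by rewrite q2 -Nde; field; rewrite pnatr_eq0 -lt0n N0 andbT gt_eqF.
by rewrite -Nde ltr_pM2r ?invr_gt0 ?mulr_gt0 ?ltr0n // ltr_pM2l.
Qed.

Section Oscillation.
Variables (R : realType) (f : R -> R) (M : R).
Hypothesis fM : forall x, `|f x| <= M.

Lemma osc_has_ubound (d : R) :
  has_ubound [set x | exists s t, `|t - s| < d /\ x = `|f s - f t|].
Proof.
exists (M + M) => x [s [t [_ ->]]].
by apply: le_trans (ler_normB _ _) _; apply: lerD.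
Qed.

Lemma dist_le_osc (d s t : R) : `|t - s| < d -> `|f s - f t| <= osc f d.
Proof. by move=> st; apply: (ub_le_sup (osc_has_ubound d)); exists s, t. Qed.

Lemma osc_ge0 (d : R) : 0 < d -> 0 <= osc f d.
Proof.
by move=> d0; apply: le_trans (dist_le_osc (s := 0) (t := 0) _); rewrite ?subrr normr0.
Qed.

Lemma holder_osc_continuous (alpha C d0 : R) : 0 < alpha -> 0 < C -> 0 < d0 ->
  (forall dl, 0 < dl -> dl < d0 -> osc f dl <= C * dl `^ alpha) -> continuous f.
Proof.
move=> a0 C0 d00 hol x; apply/cvgrPdist_lt => e e0.
have eC0 : 0 < e / (C *+ 2) by rewrite divr_gt0 // pmulrn_lgt0.
set z := (e / (C *+ 2)) `^ alpha^-1.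
have z0 : 0 < z by rewrite powR_gt0.
set dl := Num.min (d0 / 2) z.
have dl0 : 0 < dl by rewrite lt_min z0 divr_gt0.
have osc_lt : osc f dl < e.
  have dl_d0 : dl < d0 by rewrite gt_min; apply/orP; left; lra.
  apply: le_lt_trans (hol dl dl0 dl_d0) _.
  have : dl `^ alpha <= z `^ alpha.
    by rewrite ge0_ler_powR ?nnegrE ?(ltW a0) ?(ltW dl0) ?(ltW z0) // ge_min lexx orbT.
  rewrite /z -powRrM mulVf ?gt_eqF // powRr1; last exact: ltW.
  move=> /(ler_wpM2l (ltW C0)) /le_lt_trans; apply.
  rewrite (_ : C * (e / (C *+ 2)) = e / 2); first lra.
  by field; rewrite gt_eqF.
apply/nbhs_ballP; exists dl => //= y xy.
by apply: le_lt_trans (dist_le_osc _) osc_lt; rewrite distrC.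
Qed.

End Oscillation.

Definition increment_sum (R : realType) (f : R -> R) (eps : R) (x : nat -> R) (j : nat) : R :=
  \sum_(1 <= i < j.+1) (f (eps * x i) - f (eps * x i.-1)) * (x i - x i.-1).

Lemma norm_increment_sum_le (R : realType) (f : R -> R) (M eps q : R) (x : nat -> R) (j : nat) :
  (forall y, `|f y| <= M) -> 0 < eps ->
  (forall i, (0 < i <= j)%N -> `|x i - x i.-1| < q) ->
  `|increment_sum f eps x j| <= j%:R * (osc f (eps * q) * q).
Proof.
move=> fM eps0 small; apply: le_trans (ler_norm_sum _ _ _) _.
apply: (@le_trans _ _ (\sum_(1 <= i < j.+1) osc f (eps * q) * q)).
  rewrite big_nat [X in _ <= X]big_nat; apply: ler_sum => i ij.
  rewrite normrM; apply: ler_pM => //; last exact/ltW/small.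
  by apply: (dist_le_osc fM); rewrite -mulrBr normrM gtr0_norm // ltr_pM2l // distrC small.
by rewrite sumr_const_nat subn1 mulr_natl.
Qed.

Lemma measurable_increment_sum (R : realType) d (Om : measurableType d) (f : R -> R)
    (eps : R) (X : nat -> Om -> R) (j : nat) :
  measurable_fun setT f -> (forall i, measurable_fun setT (X i)) ->
  measurable_fun setT (fun w => increment_sum f eps (X ^~ w) j).
Proof.
move=> mf mX; apply: measurable_sum => i.
apply: measurable_funM; apply: measurable_funB => //;
  by apply: measurableT_comp => //; apply: measurable_funM.
Qed.

Lemma measurable_cst_set d (Om : measurableType d) (A : Prop) : measurable [set _ : Om | A].
Proof.
have [a|na] := pselect A.
  by rewrite (_ : [set _ | A] = setT) //; apply/seteqP; split.
by rewrite (_ : [set _ | A] = set0) //; apply/seteqP; split.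
Qed.

Section Grid.
Variables (R : realType) (T : R) (N : nat).

Lemma grid_ge0 (i : nat) : 0 <= T -> 0 <= grid N T i.
Proof. by move=> T0; rewrite /grid mulr_ge0 // divr_ge0. Qed.

Lemma gridSB (k : nat) : grid N T k.+1 - grid N T k = T / N%:R.
Proof. by rewrite /grid -mulrBl -natrB // subSnn mul1r. Qed.

Hypothesis N0 : (0 < N)%N.

Lemma grid_last : grid N T N = T.
Proof. by rewrite /grid mulrCA mulfV ?mulr1 // pnatr_eq0 -lt0n. Qed.

Lemma grid_index_le (t : R) : t <= T -> (grid_index N T t <= N)%N.
Proof.
move=> tT; have : has (fun j : nat => t <= grid N T j) (iota 0 N.+1).
  by apply/hasP; exists N; [rewrite mem_iota /= add0n ltnSn | rewrite grid_last].
by rewrite has_find size_iota ltnS.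
Qed.

End Grid.

Section SupLsum.
Variables (R : realType) (d : measure_display) (Om : measurableType d).
Variables (f : R -> R) (W : R -> Om -> R) (eps T : R) (N : nat).
Hypotheses (T0 : 0 < T) (N0 : (0 < N)%N).

Let X (i : nat) (w : Om) := W (grid N T i) w.
Let Lsum_range w := [set `|Lsum f W eps N T t w| | t in [set t | 0 <= t <= T]].

Lemma LsumE t w : Lsum f W eps N T t w = increment_sum f eps (X ^~ w) (grid_index N T t).
Proof. by []. Qed.

Lemma Lsum_range_neq0 w : Lsum_range w !=set0.
Proof. by exists `|Lsum f W eps N T 0 w|, 0 => //=; rewrite lexx ltW. Qed.

Lemma Lsum_range_has_ubound w : has_ubound (Lsum_range w).
Proof.
exists (\sum_(j < N.+1) `|increment_sum f eps (X ^~ w) j|) => _ [t /andP[_ tT] <-].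
have jN : (grid_index N T t < N.+1)%N by rewrite ltnS grid_index_le.
by rewrite LsumE (bigD1 (Ordinal jN)) //= lerDl sumr_ge0.
Qed.

Lemma sup_Lsum_gtE (dl : R) : [set w | dl < sup (Lsum_range w)] =
  \bigcup_(j in grid_index N T @` [set t | 0 <= t <= T])
    [set w | dl < `|increment_sum f eps (X ^~ w) j|].
Proof.
apply/seteqP; split => w /=.
- move=> /(sup_gt (Lsum_range_neq0 w)) [_ [t t0T <-] dlL].
  by exists (grid_index N T t) => //; exists t.
- move=> [_ [t t0T <-] /= dlL]; apply: lt_le_trans dlL _.
  by rewrite -LsumE; apply: (ub_le_sup (Lsum_range_has_ubound w)); exists t.
Qed.

Lemma measurable_sup_Lsum_gt (dl : R) :
  measurable_fun setT f -> (forall t, 0 <= t -> measurable_fun setT (W t)) ->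
  measurable [set w | dl < sup (Lsum_range w)].
Proof.
move=> mf mW; rewrite sup_Lsum_gtE; apply: bigcup_measurable => j _.
have mX i : measurable_fun setT (X i) by apply/mW/grid_ge0/ltW.
have := measurableT_comp (@normr_measurable R setT)
  (measurable_increment_sum eps j mf mX) measurableT (@measurable_itv R `]dl, +oo[).
rewrite setTI; congr measurable; apply/seteqP; split => w /=;
  by rewrite in_itv /= andbT.
Qed.

Lemma sup_Lsum_le (M q : R) (w : Om) : (forall x, `|f x| <= M) -> 0 < eps ->
  (forall k, (k < N)%N -> `|X k.+1 w - X k w| < q) ->
  sup (Lsum_range w) <= N%:R * (osc f (eps * q) * q).
Proof.
move=> fM eps0 small.
have q0 : 0 < q by apply: le_lt_trans (normr_ge0 _) (small 0%N N0).
apply: ge_sup (Lsum_range_neq0 w) _ => _ [t /andP[_ tT] <-].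
have giN : (grid_index N T t <= N)%N by rewrite grid_index_le.
rewrite LsumE; apply: le_trans (norm_increment_sum_le (q := q) fM eps0 _) _.
  by case=> // i /= iN; apply/small/(leq_trans iN).
apply: ler_wpM2r; last by rewrite ler_nat.
by rewrite mulr_ge0 ?(osc_ge0 fM) ?mulr_gt0 // ltW.
Qed.

End SupLsum.

Section LargeIncrement.
Variables (R : realType) (d : measure_display) (Om : measurableType d).
Variables (P : probability Om R) (W : R -> Om -> R) (T : R) (N : nat).
Hypotheses (BM : brownian_motion P W) (T0 : 0 < T) (N0 : (0 < N)%N).

Let de := T / N%:R.
Let large_increment (k : nat) :=
  [set w | 2 * Num.sqrt (de * `|ln de|) <= `|W (grid N T k.+1) w - W (grid N T k) w|].

Lemma measurable_large_increment k : measurable (large_increment k).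
Proof.
have [mW _ _ _] := BM; have mWk i := mW _ (grid_ge0 N i (ltW T0)).
have := measurable_funB (mWk k.+1) (mWk k) measurableT
  (measurable_abs_ge (2 * Num.sqrt (de * `|ln de|))).
by rewrite setTI.
Qed.

Lemma prob_large_increment k : de < 1 -> (P (large_increment k) <= (de ^+ 2 *+ 2)%:E)%E.
Proof.
move=> de1; have [_ _ incr _] := BM.
have de0 : 0 < de by rewrite divr_gt0 // ltr0n.
have lt_grid : grid N T k < grid N T k.+1 by rewrite -subr_gt0 gridSB.
have := incr _ _ (grid_ge0 N k (ltW T0)) lt_grid _
  (measurable_abs_ge (2 * Num.sqrt (de * `|ln de|))).
rewrite gridSB => ->.
by apply: normal_prob_abs_ge_log_level; rewrite de0.
Qed.

Lemma measurable_some_large_increment :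
  measurable (\big[setU/set0]_(k < N) large_increment k).
Proof. by apply: bigsetU_measurable => k _; apply: measurable_large_increment. Qed.

Lemma prob_some_large_increment :
  (P (\big[setU/set0]_(k < N) large_increment k) <= (T *+ 2 * de)%:E)%E.
Proof.
have mG := measurable_some_large_increment.
have Nde : N%:R * de = T by rewrite /de mulrCA mulfV ?mulr1 // pnatr_eq0 -lt0n.
have N1 : 1 <= N%:R :> R by rewrite ler1n.
have [de1|de1] := leP 1 de.
  (* then T = N de >= 1 and the bound is at least 2 *)
  apply: le_trans (probability_le1 P mG) _.
  by rewrite lee_fin -Nde; nra.
apply: le_trans (content_subadditive P (fun k _ => measurable_large_increment k) mG
  (@subset_refl _ _)) _.
apply: (@le_trans _ _ (\sum_(k < N) (de ^+ 2 *+ 2)%:E)%E).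
  by apply: lee_sum => k _; apply: prob_large_increment.
rewrite sumEFin sumr_const card_ord lee_fin -Nde -mulr_natl.
by rewrite le_eqVlt; apply/orP; left; apply/eqP; ring.
Qed.

End LargeIncrement.

Theorem lemma3 (R : realType) (d : measure_display) (Om : measurableType d)
  (P : probability Om R) (W : R -> Om -> R) (T : R) (f : R -> R)
  (alpha C : R) (n : R -> nat) :
  brownian_motion P W ->
  0 < T ->
  (exists M : R, forall x, `|f x| <= M) ->
  0 < alpha <= 1 -> 0 < C ->
  (exists d0 : R, 0 < d0 /\ forall dl, 0 < dl -> dl < d0 -> osc f dl <= C * dl `^ alpha) ->
  (forall e, 0 < e -> (0 < n e)%N) ->
  (forall e1 e2, 0 < e1 -> e1 <= e2 -> (n e2 <= n e1)%N) ->
  (forall N : nat, exists e0 : R, 0 < e0 /\ forall e, 0 < e -> e < e0 -> (N <= n e)%N) ->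
  exists K : R, 0 < K /\
    forall dl eps : R, 0 < dl -> 0 < eps ->
      let de := T / (n eps)%:R in
      let qe := 2 * Num.sqrt (de * `|ln de|) in
      (P [set w | (dl < sup [set `|Lsum f W eps (n eps) T t w| | t in [set t | 0 <= t <= T]])%R]
       <= P [set w | (qe * dl / (4 * T) < `|ln de| * osc f (eps * qe))%R]
          + (K * de)%:E)%E.
Proof.
(* The Hoelder bound only serves to make f continuous, hence measurable. *)
move=> BM T0 [M fM] /andP[a0 _] C0 [d0 [d00 hol]] n_gt0 _ _.
have mf := continuous_measurable_fun (holder_osc_continuous fM a0 C0 d00 hol).
have [mW _ _ _] := BM.
exists (T *+ 2); split => [|dl eps dl0 eps0]; first by rewrite pmulrn_lgt0.
cbv zeta; have N0 := n_gt0 eps eps0; set N := n eps in N0 *.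
set de := T / N%:R; set qe := 2 * Num.sqrt (de * `|ln de|).
have de0 : 0 < de by rewrite divr_gt0 // ltr0n.
have Nde : N%:R * de = T by rewrite /de mulrCA mulfV ?mulr1 // pnatr_eq0 -lt0n.
pose large k := [set w | qe <= `|W (grid N T k.+1) w - W (grid N T k) w|].
set G := \big[setU/set0]_(k < N) large k.
have mG : measurable G := @measurable_some_large_increment _ _ _ P W T N BM T0.
set A := [set w | (dl < sup _)%R].
set B := [set _ | (qe * dl / (4 * T) < _)%R].
have AsubBG : A `<=` B `|` G.
  move=> w Aw; have [Gw|notGw] := pselect (G w); [by right | left].
  have small k : (k < N)%N -> `|W (grid N T k.+1) w - W (grid N T k) w| < qe.
    move=> kN; rewrite ltNge; apply/negP => large_k; apply: notGw.
    by rewrite /G -bigcup_mkord; exists k.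
  have qe0 : 0 < qe by apply: le_lt_trans (normr_ge0 _) (small 0%N N0).
  exact: lt_log_level N0 de0 Nde qe0 (lt_le_trans Aw (sup_Lsum_le T0 N0 fM eps0 small)).
apply: le_trans (le_measure P (mem_set _) (mem_set (measurableU _ _ _ mG)) AsubBG) _.
- exact: measurable_sup_Lsum_gt.
- exact: measurable_cst_set.
apply: le_trans (measureU2 P (measurable_cst_set _ _) mG) _.
by rewrite leeD2l //; exact: (prob_some_large_increment BM T0 N0).
Qed.
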